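(* Let $X$ be a Hilbert space, $B$ a bounded self-adjoint operator on $X$ with $\rho(B)=\|B\|=1$ such that $-1$ is not an eigenvalue of $B$, and $f\in X$ such that $x=Bx+f$ is solvable. Fix $x_0\in X$, let $x_{n+1}=Bx_n+f$, and let $x_*$ be the solution with $Px_*=Px_0$, where $P$ is the orthogonal projection onto $\ker(I-B)$. Let $(f_n)\subset X$ satisfy $\|f_n-f\|\le\delta_n$ with $\delta_n\ge0$ and $(\delta_n)\in L$, and define $\tilde x_0=x_0$, $\tilde x_{n+1}=B\tilde x_n+f_n$. Put $\delta=\|(\delta_n)\|_L$. Then $\|\tilde x_n-x_*\|\le\|x_n-x_*\|+\|\sigma_n\|\,\delta$ for all $n$, and the approximations quasi-converge to $x_*$: for every $\varepsilon>0$ there is $N(\varepsilon)$ such that for all $N(\varepsilon)\le N_-<N_+$ there is $\eta>0$ such that $\|(\delta_n)\|_L<\eta$ implies $\|\tilde x_n-x_*\|<\varepsilon$ for all $n\in[N_-,N_+]$; i.e. $\lim_{n\to\infty,\ \|\sigma_n\|\delta\to0}\|\tilde x_n-x_*\|=0$.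
   Context: $L$ is a Banach space of real sequences $(a_k)_{k\ge0}$ with monotone norm (if $|a_k|\le|b_k|$ for all $k$ then $\|(a_k)\|_L\le\|(b_k)\|_L$), on which each linear functional $\sigma_n((a_k))=a_0+a_1+\dots+a_{n-1}$ ($\sigma_0=0$) is bounded; $\|\sigma_n\|$ denotes its norm as a functional on $L$. $I$ is the identity. *)

From Stdlib Require Import Reals Lra.
Open Scope R_scope.

Record RHilbert := {
  hcar :> Type;
  hzero : hcar;
  hadd : hcar -> hcar -> hcar;
  hopp : hcar -> hcar;
  hscal : R -> hcar -> hcar;
  hinner : hcar -> hcar -> R;
  haddA : forall x y z, hadd x (hadd y z) = hadd (hadd x y) z;
  haddC : forall x y, hadd x y = hadd y x;
  hadd0 : forall x, hadd x hzero = x;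
  haddN : forall x, hadd x (hopp x) = hzero;
  hscalA : forall a b x, hscal a (hscal b x) = hscal (a * b) x;
  hscal1 : forall x, hscal 1 x = x;
  hscalDr : forall a x y, hscal a (hadd x y) = hadd (hscal a x) (hscal a y);
  hscalDl : forall a b x, hscal (a + b) x = hadd (hscal a x) (hscal b x);
  hinnerC : forall x y, hinner x y = hinner y x;
  hinnerDl : forall x y z, hinner (hadd x y) z = hinner x z + hinner y z;
  hinnerZl : forall a x y, hinner (hscal a x) y = a * hinner x y;
  hinner_ge0 : forall x, 0 <= hinner x x;
  hinner_eq0 : forall x, hinner x x = 0 -> x = hzero;
  hcomplete : forall u : nat -> hcar,
    (forall eps, eps > 0 -> exists N, forall m n, (N <= m)%nat -> (N <= n)%nat ->
        sqrt (hinner (hadd (u m) (hopp (u n))) (hadd (u m) (hopp (u n)))) < eps) ->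
    exists l, forall eps, eps > 0 -> exists N, forall n, (N <= n)%nat ->
        sqrt (hinner (hadd (u n) (hopp l)) (hadd (u n) (hopp l))) < eps
}.

Arguments hzero {r}.
Arguments hadd {r}.
Arguments hopp {r}.
Arguments hscal {r}.
Arguments hinner {r}.

Definition hsub {X : RHilbert} (x y : X) : X := hadd x (hopp y).
Definition hnorm {X : RHilbert} (x : X) : R := sqrt (hinner x x).

Definition is_linear {X : RHilbert} (T : X -> X) : Prop :=
  (forall x y, T (hadd x y) = hadd (T x) (T y)) /\
  (forall a x, T (hscal a x) = hscal a (T x)).

Definition is_bounded {X : RHilbert} (T : X -> X) : Prop :=
  exists C, forall x, hnorm (T x) <= C * hnorm x.

Definition self_adjoint {X : RHilbert} (T : X -> X) : Prop :=
  forall x y, hinner (T x) y = hinner x (T y).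

Definition opnorm_is {X : RHilbert} (T : X -> X) (c : R) : Prop :=
  is_lub (fun r => exists x : X, hnorm x <= 1 /\ r = hnorm (T x)) c.

Definition in_spectrum {X : RHilbert} (T : X -> X) (lam : R) : Prop :=
  ~ (exists S : X -> X, is_linear S /\ is_bounded S /\
       (forall x, hsub (T (S x)) (hscal lam (S x)) = x) /\
       (forall x, S (hsub (T x) (hscal lam x)) = x)).

Definition spectral_radius_is {X : RHilbert} (T : X -> X) (c : R) : Prop :=
  is_lub (fun r => exists lam, in_spectrum T lam /\ r = Rabs lam) c.

Definition is_eigenvalue {X : RHilbert} (T : X -> X) (lam : R) : Prop :=
  exists x : X, x <> hzero /\ T x = hscal lam x.

Definition ker_I_minus {X : RHilbert} (T : X -> X) (y : X) : Prop := T y = y.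

Definition orth_proj_onto {X : RHilbert} (K : X -> Prop) (P : X -> X) : Prop :=
  is_linear P /\ (forall y, K (P y)) /\
  (forall y k, K k -> hinner (hsub y (P y)) k = 0).

Fixpoint iterseq {X : RHilbert} (T : X -> X) (g : nat -> X) (x0 : X) (n : nat) : X :=
  match n with
  | O => x0
  | S k => hadd (T (iterseq T g x0 k)) (g k)
  end.

Fixpoint sigma (n : nat) (a : nat -> R) : R :=
  match n with
  | O => 0
  | S k => sigma k a + a k
  end.

Definition seq_banach (inL : (nat -> R) -> Prop) (normL : (nat -> R) -> R) : Prop :=
  inL (fun _ => 0) /\
  (forall a b, inL a -> inL b -> inL (fun k => a k + b k)) /\
  (forall c a, inL a -> inL (fun k => c * a k)) /\
  (forall a, inL a -> 0 <= normL a) /\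
  (forall a, inL a -> normL a = 0 -> forall k, a k = 0) /\
  (forall c a, inL a -> normL (fun k => c * a k) = Rabs c * normL a) /\
  (forall a b, inL a -> inL b -> normL (fun k => a k + b k) <= normL a + normL b) /\
  (forall u : nat -> nat -> R, (forall m, inL (u m)) ->
     (forall eps, eps > 0 -> exists N, forall m n, (N <= m)%nat -> (N <= n)%nat ->
        normL (fun k => u m k - u n k) < eps) ->
     exists l, inL l /\ forall eps, eps > 0 -> exists N, forall n, (N <= n)%nat ->
        normL (fun k => u n k - l k) < eps).

Definition monotone_norm (inL : (nat -> R) -> Prop) (normL : (nat -> R) -> R) : Prop :=
  forall a b, inL a -> inL b -> (forall k, Rabs (a k) <= Rabs (b k)) -> normL a <= normL b.

Definition sigmas_bounded (inL : (nat -> R) -> Prop) (normL : (nat -> R) -> R) : Prop :=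
  forall n, exists C, forall a, inL a -> Rabs (sigma n a) <= C * normL a.

Definition sigma_norm_is (inL : (nat -> R) -> Prop) (normL : (nat -> R) -> R)
  (n : nat) (c : R) : Prop :=
  is_lub (fun r => exists a, inL a /\ normL a <= 1 /\ r = Rabs (sigma n a)) c.

From Pilot Require Import Defs.
From Stdlib Require Import Reals Lra Lia FunctionalExtensionality Classical.
Open Scope R_scope.

(* Write x_n, x~_n for the exact and perturbed iterates. Then
   x~_n - x_* = (x~_n - x_n) + B^n (x_0 - x_* ). As B is a contraction,
   ||x~_n - x_n|| <= delta_0 + ... + delta_(n-1) = sigma_n(delta) <= ||sigma_n|| ||delta||_L.
   The vector y = x_0 - x_* is orthogonal to ker(I - B), and for a self-adjoint contraction
   without eigenvalue -1 the powers B^n y tend to 0: the numbers ||B^k y||^2 decrease and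
   <B^m y, B^n y> = <y, B^(m+n) y>, so B^(2n) y is Cauchy; its limit z satisfies B^2 z = z,
   hence B z = z, and z is a limit of vectors orthogonal to it, so z = 0. On a window
   [N_-, N_+] the norms ||sigma_n|| are bounded, which yields eta. *)

Section HilbertAlgebra.
Context {X : RHilbert}.
Implicit Types x y z u v : X.

Lemma hadd_cancel x y z : hadd x y = hadd x z -> y = z.
Proof.
  intro H.
  assert (E : hadd (hopp x) (hadd x y) = hadd (hopp x) (hadd x z)) by now rewrite H.
  now rewrite !haddA, (haddC _ (hopp x) x), haddN, !(haddC _ hzero), !hadd0 in E.
Qed.

Lemma hadd0l x : hadd hzero x = x.
Proof. now rewrite haddC, hadd0. Qed.

Lemma hscal0l x : hscal 0 x = hzero.
Proof.
  apply (hadd_cancel (hscal 0 x)). rewrite hadd0, <- hscalDl. f_equal; ring.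
Qed.

Lemma hscal0r a : hscal a (@hzero X) = hzero.
Proof. apply (hadd_cancel (hscal a hzero)). now rewrite hadd0, <- hscalDr, hadd0. Qed.

Lemma hoppE x : hopp x = hscal (-1) x.
Proof.
  apply (hadd_cancel x). rewrite haddN.
  rewrite <- (hscal1 _ x) at 1. rewrite <- hscalDl.
  replace (1 + -1) with 0 by ring. now rewrite hscal0l.
Qed.

Lemma hoppD x y : hopp (hadd x y) = hadd (hopp x) (hopp y).
Proof. rewrite !hoppE. apply hscalDr. Qed.

Lemma hoppK x : hopp (hopp x) = x.
Proof. rewrite !hoppE, hscalA. replace (-1 * -1) with 1 by ring. apply hscal1. Qed.

Lemma hinnerDr x y z : hinner x (hadd y z) = hinner x y + hinner x z.
Proof. now rewrite hinnerC, hinnerDl, (hinnerC _ y), (hinnerC _ z). Qed.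

Lemma hinnerZr a x y : hinner x (hscal a y) = a * hinner x y.
Proof. now rewrite hinnerC, hinnerZl, hinnerC. Qed.

Lemma hinnerNl x y : hinner (hopp x) y = - hinner x y.
Proof. rewrite hoppE, hinnerZl. ring. Qed.

Lemma hinnerNr x y : hinner x (hopp y) = - hinner x y.
Proof. rewrite hoppE, hinnerZr. ring. Qed.

Lemma hinner0l x : hinner hzero x = 0.
Proof. rewrite <- (hscal0l x), hinnerZl. ring. Qed.

Lemma hinner_addE u v :
  hinner (hadd u v) (hadd u v) = hinner u u + 2 * hinner u v + hinner v v.
Proof. rewrite hinnerDl, !hinnerDr, (hinnerC _ v u). ring. Qed.

Lemma hinner_subE u v :
  hinner (hsub u v) (hsub u v) = hinner u u - 2 * hinner u v + hinner v v.
Proof. unfold hsub. rewrite hinner_addE, hinnerNl, !hinnerNr. ring. Qed.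

Lemma hsubxx x : hsub x x = hzero.
Proof. apply haddN. Qed.

Lemma hsubx0 x : hsub x hzero = x.
Proof. unfold hsub. now rewrite hoppE, hscal0r, hadd0. Qed.

Lemma hoppB x y : hopp (hsub x y) = hsub y x.
Proof. unfold hsub. now rewrite hoppD, hoppK, haddC. Qed.

Lemma hsubK x y : hadd (hsub x y) y = x.
Proof. unfold hsub. now rewrite <- haddA, (haddC _ (hopp y) y), haddN, hadd0. Qed.

Lemma hsub_eq0 x y : hsub x y = hzero -> x = y.
Proof. intro H. now rewrite <- (hsubK x y), H, hadd0l. Qed.

Lemma hsub_chain x y z : hsub x z = hadd (hsub x y) (hsub y z).
Proof.
  unfold hsub.
  now rewrite <- haddA, (haddA _ (hopp y)), (haddC _ (hopp y) y), haddN, hadd0l.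
Qed.

Lemma hsubDD x u y v : hsub (hadd x u) (hadd y v) = hadd (hsub x y) (hsub u v).
Proof.
  unfold hsub. rewrite hoppD, <- !haddA. f_equal.
  rewrite !haddA. f_equal. apply haddC.
Qed.

End HilbertAlgebra.

Section HilbertNorm.
Context {X : RHilbert}.
Implicit Types x y z u v : X.

Lemma hnorm_ge0 x : 0 <= hnorm x.
Proof. apply sqrt_pos. Qed.

Lemma hnorm_sq x : hnorm x * hnorm x = hinner x x.
Proof. apply sqrt_sqrt, hinner_ge0. Qed.

Lemma hnorm_eq0 x : hnorm x = 0 -> x = hzero.
Proof. intro H. apply hinner_eq0. rewrite <- hnorm_sq, H. ring. Qed.

Lemma hnorm0 : hnorm (@hzero X) = 0.
Proof. unfold hnorm. now rewrite hinner0l, sqrt_0. Qed.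

Lemma hnorm_small_eq0 x : (forall eps, eps > 0 -> hnorm x < eps) -> x = hzero.
Proof.
  intro H. apply hnorm_eq0. pose proof (hnorm_ge0 x).
  destruct (Req_dec (hnorm x) 0) as [E|E]; auto.
  specialize (H (hnorm x) ltac:(lra)). lra.
Qed.

Lemma hinner_sq_le x y : hinner x y * hinner x y <= hinner x x * hinner y y.
Proof.
  destruct (Req_dec (hinner y y) 0) as [H|H].
  - apply hinner_eq0 in H. subst y. rewrite (hinnerC _ x), !hinner0l. lra.
  - pose proof (hinner_ge0 _ y) as Hy.
    set (t := - hinner x y / hinner y y).
    pose proof (hinner_ge0 _ (hadd x (hscal t y))) as G.
    rewrite hinner_addE, !hinnerZr, hinnerZl in G.
    assert (E : hinner y y * (hinner x x + 2 * (t * hinner x y) + t * (t * hinner y y))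
               = hinner x x * hinner y y - hinner x y * hinner x y) by (unfold t; field; lra).
    assert (0 <= hinner y y * (hinner x x + 2 * (t * hinner x y) + t * (t * hinner y y)))
      by (apply Rmult_le_pos; lra).
    lra.
Qed.

Lemma hinner_abs_le x y : Rabs (hinner x y) <= hnorm x * hnorm y.
Proof.
  rewrite <- (Rabs_pos_eq (hnorm x * hnorm y))
    by (apply Rmult_le_pos; apply hnorm_ge0).
  apply Rsqr_le_abs_0. rewrite Rsqr_mult. unfold Rsqr.
  rewrite !hnorm_sq. apply hinner_sq_le.
Qed.

Lemma hnormD_le x y : hnorm (hadd x y) <= hnorm x + hnorm y.
Proof.
  apply Rsqr_incr_0_var.
  - unfold Rsqr. rewrite hnorm_sq, hinner_addE.
    pose proof (hinner_abs_le x y). pose proof (Rle_abs (hinner x y)).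
    rewrite <- (hnorm_sq x), <- (hnorm_sq y). nra.
  - pose proof (hnorm_ge0 x); pose proof (hnorm_ge0 y); lra.
Qed.

Lemma hnormZ a x : hnorm (hscal a x) = Rabs a * hnorm x.
Proof.
  unfold hnorm. rewrite hinnerZl, hinnerZr, <- Rmult_assoc, sqrt_mult.
  - f_equal. apply sqrt_Rsqr_abs.
  - nra.
  - apply hinner_ge0.
Qed.

Lemma hnormN x : hnorm (hopp x) = hnorm x.
Proof. rewrite hoppE, hnormZ, Rabs_left by lra. ring. Qed.

Lemma hnorm_subC x y : hnorm (hsub x y) = hnorm (hsub y x).
Proof. now rewrite <- hnormN, hoppB. Qed.

Lemma hnorm_sub_le x y z : hnorm (hsub x z) <= hnorm (hsub x y) + hnorm (hsub y z).
Proof. rewrite (hsub_chain x y z). apply hnormD_le. Qed.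

(* Expanding ||z||^2 = <(z - u) + u, z> kills the second term. *)
Lemma hnorm_le_sub_orth u z : hinner u z = 0 -> hnorm z <= hnorm (hsub z u).
Proof.
  intro Huz. pose proof (hnorm_ge0 z). pose proof (hnorm_ge0 (hsub z u)).
  assert (Hsq : hnorm z * hnorm z <= hnorm (hsub z u) * hnorm z).
  { rewrite hnorm_sq. rewrite <- (hsubK z u) at 1.
    rewrite hinnerDl, Huz, Rplus_0_r.
    eapply Rle_trans; [apply Rle_abs | apply hinner_abs_le]. }
  destruct (Req_dec (hnorm z) 0) as [Z|Z]; [lra|].
  apply Rmult_le_reg_r with (hnorm z); lra.
Qed.

End HilbertNorm.

Definition converges_to {X : RHilbert} (u : nat -> X) (l : X) : Prop :=
  forall eps, eps > 0 -> exists N, forall n, (N <= n)%nat -> hnorm (hsub (u n) l) < eps.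

Definition is_contraction {X : RHilbert} (T : X -> X) : Prop :=
  forall x, hnorm (T x) <= hnorm x.

Section LinearOperators.
Context {X : RHilbert} (T : X -> X) (HT : is_linear T).

Lemma linear0 : T hzero = hzero.
Proof. destruct HT as [_ HZ]. now rewrite <- (hscal0l hzero), HZ, !hscal0l. Qed.

Lemma linearB x y : T (hsub x y) = hsub (T x) (T y).
Proof.
  destruct HT as [HD HZ]. unfold hsub.
  now rewrite HD, !hoppE, HZ.
Qed.

Lemma opnorm_le c : opnorm_is T c -> forall x, hnorm (T x) <= c * hnorm x.
Proof.
  intros [Hub _] x.
  destruct (Req_dec (hnorm x) 0) as [H0|H0].
  - apply hnorm_eq0 in H0. subst x. rewrite linear0, hnorm0. lra.
  - pose proof (hnorm_ge0 x). set (r := hnorm x) in *.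
    assert (Hr : 0 < / r) by (apply Rinv_0_lt_compat; lra).
    assert (Hunit : hnorm (T (hscal (/ r) x)) <= c).
    { apply Hub. exists (hscal (/ r) x). split; [|reflexivity].
      rewrite hnormZ, Rabs_pos_eq by lra. fold r. right; field; lra. }
    rewrite (proj2 HT), hnormZ, Rabs_pos_eq in Hunit by lra.
    apply Rmult_le_reg_l with (/ r); [exact Hr|].
    replace (/ r * (c * r)) with c by (field; lra). exact Hunit.
Qed.

Lemma contraction_of_opnorm1 : opnorm_is T 1 -> is_contraction T.
Proof. intros H x. rewrite <- (Rmult_1_l (hnorm x)). now apply opnorm_le. Qed.

(* T z is also a limit of u, because T is 1-Lipschitz. *)
Lemma limit_fixed_of_contraction (u : nat -> X) z :
  is_contraction T -> (forall n, u (S n) = T (u n)) -> converges_to u z -> T z = z.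
Proof.
  intros Hc Hu Hz. symmetry. apply hsub_eq0, hnorm_small_eq0. intros eps Heps.
  destruct (Hz (eps / 2) ltac:(lra)) as [N HN].
  eapply Rle_lt_trans; [apply (hnorm_sub_le _ (u (S N)))|].
  rewrite Hu, <- linearB, hnorm_subC.
  pose proof (Hc (hsub (u N) z)) as HTN. pose proof (HN N (le_n N)) as HuN.
  pose proof (HN (S N) (le_S _ _ (le_n N))) as HuSN. rewrite Hu in HuSN. lra.
Qed.

End LinearOperators.

Section PowersOfSelfAdjointContraction.
Context {X : RHilbert} (B : X -> X).
Hypotheses (HBlin : is_linear B) (HBsa : self_adjoint B) (HBc : is_contraction B).

Lemma iter_inner y m n :
  hinner (Nat.iter m B y) (Nat.iter n B y) = hinner y (Nat.iter (m + n) B y).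
Proof.
  revert n; induction m as [|m IHm]; intro n; [reflexivity|].
  simpl. rewrite HBsa. change (B (Nat.iter n B y)) with (Nat.iter (S n) B y).
  now rewrite IHm, Nat.add_succ_r.
Qed.

Lemma iter_norm_antitone y n k :
  (n <= k)%nat -> hnorm (Nat.iter k B y) <= hnorm (Nat.iter n B y).
Proof.
  induction 1; [lra|]. eapply Rle_trans; [apply HBc | assumption].
Qed.

Lemma iter_orth_fixed y k :
  B k = k -> hinner y k = 0 -> forall n, hinner (Nat.iter n B y) k = 0.
Proof. intros Hk Hy n. induction n; [exact Hy|]. simpl. now rewrite HBsa, Hk. Qed.

(* ||B^(2m) y - B^(2n) y||^2 = e(2m) - 2 e(m+n) + e(2n) with e k = ||B^k y||^2,
   and e is nonincreasing, hence convergent. *)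
Lemma even_iter_cauchy y :
  forall eps, eps > 0 -> exists N, forall m n, (N <= m)%nat -> (N <= n)%nat ->
    hnorm (hsub (Nat.iter (m + m) B y) (Nat.iter (n + n) B y)) < eps.
Proof.
  set (e k := hinner (Nat.iter k B y) (Nat.iter k B y)).
  assert (Hdec : Un_decreasing e).
  { intro k. apply sqrt_le_0; try apply hinner_ge0.
    apply (iter_norm_antitone y k (S k)); lia. }
  assert (Hlb : has_lb e).
  { exists 0. intros r [i ->]. unfold opp_seq, e. pose proof (hinner_ge0 _ (Nat.iter i B y)). lra. }
  destruct (decreasing_cv e Hdec Hlb) as [L HL].
  intros eps Heps. destruct (HL (eps * eps / 4)) as [N HN]; [nra|].
  exists N. intros m n Hm Hn.
  assert (ES : hinner (hsub (Nat.iter (m + m) B y) (Nat.iter (n + n) B y))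
                      (hsub (Nat.iter (m + m) B y) (Nat.iter (n + n) B y))
               = e (m + m)%nat - 2 * e (m + n)%nat + e (n + n)%nat).
  { unfold e. rewrite hinner_subE, !iter_inner.
    replace (m + n + (m + n))%nat with (m + m + (n + n))%nat by lia. reflexivity. }
  pose proof (HN (m + m)%nat ltac:(lia)) as H1.
  pose proof (HN (n + n)%nat ltac:(lia)) as H2.
  pose proof (HN (m + n)%nat ltac:(lia)) as H3.
  unfold Rdist in *. apply Rabs_def2 in H1, H2, H3.
  unfold hnorm. rewrite ES, <- (sqrt_square eps) by lra.
  apply sqrt_lt_1_alt. split; [|lra].
  rewrite <- ES. apply hinner_ge0.
Qed.

(* B (B z - z) = z - B z, so a nonzero B z - z would be an eigenvector for -1. *)
Lemma fixed_of_square_fixed z : ~ is_eigenvalue B (-1) -> B (B z) = z -> B z = z.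
Proof.
  intros Hm1 HBBz. apply hsub_eq0.
  destruct (classic (hsub (B z) z = hzero)) as [E|E]; [exact E|].
  exfalso. apply Hm1. exists (hsub (B z) z). split; [exact E|].
  now rewrite linearB, HBBz, <- hoppE, hoppB.
Qed.

Theorem iter_converges_to0 y :
  ~ is_eigenvalue B (-1) -> (forall k, B k = k -> hinner y k = 0) ->
  converges_to (fun n => Nat.iter n B y) hzero.
Proof.
  intros Hm1 Hy.
  set (u n := Nat.iter (n + n) B y).
  destruct (hcomplete X u (even_iter_cauchy y)) as [z Hz].
  change (converges_to u z) in Hz.
  assert (HBBc : is_contraction (fun x => B (B x))).
  { intro x. eapply Rle_trans; apply HBc. }
  assert (HBBlin : is_linear (fun x => B (B x))).
  { destruct HBlin as [HD HZ]. split; intros; now rewrite ?HD, ?HZ. }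
  assert (HBz : B z = z).
  { apply fixed_of_square_fixed; [exact Hm1|].
    apply (limit_fixed_of_contraction _ HBBlin u); [exact HBBc| |exact Hz].
    intro n. unfold u. now replace (S n + S n)%nat with (S (S (n + n))) by lia. }
  assert (Hz0 : z = hzero).
  { apply hnorm_small_eq0. intros eps Heps.
    destruct (Hz eps Heps) as [N HN]. specialize (HN N (le_n N)).
    rewrite hnorm_subC in HN.
    eapply Rle_lt_trans; [|exact HN].
    apply hnorm_le_sub_orth, iter_orth_fixed; auto. }
  subst z. intros eps Heps. destruct (Hz eps Heps) as [N HN].
  exists (N + N)%nat. intros n Hn.
  specialize (HN N (le_n N)). unfold u in HN. rewrite hsubx0 in *.
  eapply Rle_lt_trans; [apply iter_norm_antitone, Hn | exact HN].
Qed.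

End PowersOfSelfAdjointContraction.

Section Iterations.
Context {X : RHilbert} (B : X -> X) (HBlin : is_linear B).

Lemma iterseq_sub_fixed f x0 xs n :
  xs = hadd (B xs) f ->
  hsub (iterseq B (fun _ => f) x0 n) xs = Nat.iter n B (hsub x0 xs).
Proof.
  intro Hxs. induction n as [|n IHn]; [reflexivity|]. simpl.
  rewrite Hxs at 1. now rewrite hsubDD, hsubxx, hadd0, <- linearB, IHn.
Qed.

Lemma iterseq_perturbation_le f fs ds x0 :
  is_contraction B -> (forall n, hnorm (hsub (fs n) f) <= ds n) ->
  forall n, hnorm (hsub (iterseq B fs x0 n) (iterseq B (fun _ => f) x0 n)) <= Defs.sigma n ds.
Proof.
  intros Hc Hd n. induction n as [|n IHn]; simpl.
  - rewrite hsubxx, hnorm0. lra.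
  - rewrite hsubDD, <- linearB by exact HBlin.
    eapply Rle_trans; [apply hnormD_le|].
    pose proof (Hc (hsub (iterseq B fs x0 n) (iterseq B (fun _ => f) x0 n))).
    specialize (Hd n). lra.
Qed.

End Iterations.

Section SequenceSpace.
Variables (inL : (nat -> R) -> Prop) (normL : (nat -> R) -> R).
Hypothesis HL : seq_banach inL normL.

Lemma sigmaZ n c (a : nat -> R) : Defs.sigma n (fun k => c * a k) = c * Defs.sigma n a.
Proof. induction n as [|n IHn]; simpl; [ring|]. rewrite IHn. ring. Qed.

Lemma sigma_eq0 n (a : nat -> R) : (forall k, a k = 0) -> Defs.sigma n a = 0.
Proof. intro H. induction n as [|n IHn]; simpl; [ring|]. rewrite IHn, H. ring. Qed.

Lemma sigma_norm_ge0 n s : sigma_norm_is inL normL n s -> 0 <= s.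
Proof.
  destruct HL as (H0 & _ & _ & _ & _ & HZ & _).
  intros [Hub _]. apply Hub. exists (fun _ => 0). split; [exact H0|]. split.
  - replace (fun _ : nat => 0) with (fun k : nat => 0 * (fun _ : nat => 0) k)
      by (apply functional_extensionality; intro; ring).
    rewrite HZ by exact H0. rewrite Rabs_R0. lra.
  - now rewrite sigma_eq0, Rabs_R0.
Qed.

Lemma sigma_le_norm n s a :
  sigma_norm_is inL normL n s -> inL a -> Rabs (Defs.sigma n a) <= s * normL a.
Proof.
  destruct HL as (_ & _ & HZin & Hge & Heq & HZ & _).
  intros [Hub _] Ha.
  destruct (Req_dec (normL a) 0) as [Z|Z].
  - rewrite sigma_eq0 by (apply Heq; auto). rewrite Z, Rabs_R0. lra.
  - pose proof (Hge a Ha). set (c := normL a) in *.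
    assert (Hc : 0 < / c) by (apply Rinv_0_lt_compat; lra).
    assert (Hunit : Rabs (Defs.sigma n (fun k => / c * a k)) <= s).
    { apply Hub. exists (fun k => / c * a k). split; [now apply HZin|]. split; [|reflexivity].
      rewrite HZ by exact Ha. fold c. rewrite Rabs_pos_eq by lra. right; field; lra. }
    rewrite sigmaZ, Rabs_mult, Rabs_pos_eq in Hunit by lra.
    apply Rmult_le_reg_l with (/ c); [exact Hc|].
    replace (/ c * (s * c)) with s by (field; lra). exact Hunit.
Qed.

End SequenceSpace.

Lemma bounded_on_initial_segment (s : nat -> R) (m : nat) :
  exists M, 0 < M /\ forall n, (n <= m)%nat -> s n <= M.
Proof.
  induction m as [|m [M [HM HMb]]].
  - exists (Rabs (s 0%nat) + 1).
    pose proof (Rle_abs (s 0%nat)). pose proof (Rabs_pos (s 0%nat)). split; [lra|].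
    intros n Hn. replace n with 0%nat by lia. lra.
  - exists (M + Rabs (s (S m))).
    pose proof (Rle_abs (s (S m))). pose proof (Rabs_pos (s (S m))). split; [lra|].
    intros n Hn. destruct (Nat.eq_dec n (S m)) as [->|Hne]; [lra|].
    specialize (HMb n ltac:(lia)). lra.
Qed.

Lemma orth_proj_ker_orth {X : RHilbert} (K : X -> Prop) (P : X -> X) y :
  orth_proj_onto K P -> P y = hzero -> forall k, K k -> hinner y k = 0.
Proof.
  intros (_ & _ & Horth) Hy k Hk. specialize (Horth y k Hk).
  now rewrite Hy, hsubx0 in Horth.
Qed.

Lemma perturbed_iterseq_error_le {X : RHilbert} (B : X -> X) inL normL
  (HBlin : is_linear B) (HBc : is_contraction B) (HL : seq_banach inL normL)
  (sn : nat -> R) (Hsn : forall n, sigma_norm_is inL normL n (sn n))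
  f fs ds x0 xs :
  inL ds -> (forall n, hnorm (hsub (fs n) f) <= ds n) ->
  forall n, hnorm (hsub (iterseq B fs x0 n) xs)
            <= hnorm (hsub (iterseq B (fun _ => f) x0 n) xs) + sn n * normL ds.
Proof.
  intros HdsL Hfs n.
  eapply Rle_trans; [apply (hnorm_sub_le _ (iterseq B (fun _ => f) x0 n))|].
  pose proof (iterseq_perturbation_le B HBlin f fs ds x0 HBc Hfs n).
  pose proof (sigma_le_norm inL normL HL n (sn n) ds (Hsn n) HdsL).
  pose proof (Rle_abs (Defs.sigma n ds)). lra.
Qed.

Theorem theorem1p7
  (X : RHilbert) (B : X -> X)
  (HBlin : is_linear B) (HBbd : is_bounded B) (HBsa : self_adjoint B)
  (HBnorm : opnorm_is B 1) (HBrho : spectral_radius_is B 1)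
  (HBm1 : ~ is_eigenvalue B (-1))
  (f : X) (Hsolv : exists x : X, x = hadd (B x) f)
  (P : X -> X) (HP : orth_proj_onto (ker_I_minus B) P)
  (x0 xs : X) (Hxs : xs = hadd (B xs) f) (HPxs : P xs = P x0)
  (inL : (nat -> R) -> Prop) (normL : (nat -> R) -> R)
  (HL : seq_banach inL normL) (HLmon : monotone_norm inL normL)
  (HLsig : sigmas_bounded inL normL)
  (sn : nat -> R) (Hsn : forall n, sigma_norm_is inL normL n (sn n)) :
  (forall (fs : nat -> X) (ds : nat -> R),
     (forall n, 0 <= ds n) -> inL ds ->
     (forall n, hnorm (hsub (fs n) f) <= ds n) ->
     forall n,
       hnorm (hsub (iterseq B fs x0 n) xs)
       <= hnorm (hsub (iterseq B (fun _ => f) x0 n) xs) + sn n * normL ds)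
  /\
  (forall eps, eps > 0 ->
     exists N : nat, forall Nm Np : nat, (N <= Nm)%nat -> (Nm < Np)%nat ->
       exists eta, eta > 0 /\
         forall (fs : nat -> X) (ds : nat -> R),
           (forall n, 0 <= ds n) -> inL ds ->
           (forall n, hnorm (hsub (fs n) f) <= ds n) ->
           normL ds < eta ->
           forall n, (Nm <= n)%nat -> (n <= Np)%nat ->
             hnorm (hsub (iterseq B fs x0 n) xs) < eps).
Proof.
  pose proof (contraction_of_opnorm1 B HBlin HBnorm) as HBc.
  pose proof (perturbed_iterseq_error_le B inL normL HBlin HBc HL sn Hsn f) as Herr.
  split; [intros fs ds _; apply Herr|].
  assert (Hy : forall k, B k = k -> hinner (hsub x0 xs) k = 0).
  { apply (orth_proj_ker_orth _ P _ HP).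
    now rewrite (linearB P (proj1 HP)), HPxs, hsubxx. }
  intros eps Heps.
  destruct (iter_converges_to0 B HBlin HBsa HBc _ HBm1 Hy (eps / 2)) as [N HN]; [lra|].
  exists N. intros Nm Np HNm _.
  destruct (bounded_on_initial_segment sn Np) as [M [HM HMb]].
  exists (eps / (2 * M)). split; [apply Rdiv_lt_0_compat; lra|].
  intros fs ds _ HdsL Hfs Hsmall n Hn1 Hn2.
  pose proof (Herr fs ds x0 xs HdsL Hfs n) as Hbound.
  rewrite (iterseq_sub_fixed B HBlin f x0 xs n Hxs) in Hbound.
  specialize (HN n ltac:(lia)). rewrite hsubx0 in HN.
  pose proof (sigma_norm_ge0 inL normL HL n (sn n) (Hsn n)).
  pose proof (proj1 (proj2 (proj2 (proj2 HL))) ds HdsL) as HdsL0.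
  assert (M * normL ds < eps / 2).
  { replace (eps / 2) with (M * (eps / (2 * M))) by (field; lra).
    now apply Rmult_lt_compat_l. }
  specialize (HMb n Hn2). nra.
Qed.
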